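(* Let $\mathfrak{R}$ be either $\mathbb{F}_q$ ($q$ a prime power) or $\mathbb{Z}_k$ ($k\ge2$), with character $\chi$ as in the context. Let $C$ and $D$ be $\mathfrak{R}$-linear codes of length $n$ and $\bm{w}\in\mathfrak{R}^n$. Then (i) $\displaystyle \mathfrak{Jac}^{av}(C,D^{\perp},\bm{w};x_a:a\in\mathfrak{R}^3)=\frac{1}{|D|}\mathfrak{Jac}^{av}\Big(C,D,\bm{w};\sum_{b\in\mathfrak{R}}\chi(a_2b)x_{(a_1,b,a_3)}:a\in\mathfrak{R}^3\Big)$; (ii) $\displaystyle \mathfrak{Jac}^{av}(C^{\perp},D,\bm{w};x_a:a\in\mathfrak{R}^3)=\frac{1}{|C|}\mathfrak{Jac}^{av}\Big(C,D,\bm{w};\sum_{b\in\mathfrak{R}}\chi(a_1b)x_{(b,a_2,a_3)}:a\in\mathfrak{R}^3\Big)$; (iii) $\displaystyle \mathfrak{Jac}^{av}(C^{\perp},D^{\perp},\bm{w};x_a:a\in\mathfrak{R}^3)=\frac{1}{|C||D|}\mathfrak{Jac}^{av}\Big(C,D,\bm{w};\sum_{b_1,b_2\in\mathfrak{R}}\chi(a_1b_1+a_2b_2)x_{(b_1,b_2,a_3)}:a\in\mathfrak{R}^3\Big)$, where on each right-hand side every variable $x_{(a_1,a_2,a_3)}$ of $\mathfrak{Jac}^{av}(C,D,\bm{w};x_a:a\in\mathfrak{R}^3)$ is replaced by the indicated linear form.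
   Context: An $\mathbb{F}_q$-linear code of length $n$ is a subspace of $\mathbb{F}_q^n$; a $\mathbb{Z}_k$-linear code is an additive subgroup of $\mathbb{Z}_k^n$. $C^\perp=\{\bm{v}\in\mathfrak{R}^n : \sum_iu_iv_i=0\ \forall\bm{u}\in C\}$. The character $\chi$: if $\mathfrak{R}=\mathbb{F}_q$, $q=p^f$, fix a root $\lambda$ of a primitive irreducible polynomial of degree $f$ over $\mathbb{F}_p$, write $\alpha=\alpha_0+\alpha_1\lambda+\cdots+\alpha_{f-1}\lambda^{f-1}$ ($\alpha_i\in\mathbb{F}_p$) and set $\chi(\alpha)=\zeta_p^{\alpha_0}$; if $\mathfrak{R}=\mathbb{Z}_k$, $\chi(\alpha)=\zeta_k^{\alpha}$ ($\zeta_m$ a primitive $m$-th root of unity). For $a\in\mathfrak{R}^3$, $h_a(\bm{u},\bm{v};\bm{w})=\#\{i:(u_i,v_i,w_i)=a\}$; $\mathfrak{Jac}(C,D,\bm{w};x_a:a\in\mathfrak{R}^3)=\sum_{\bm{u}\in C,\bm{v}\in D}\prod_{a\in\mathfrak{R}^3}x_a^{h_a(\bm{u},\bm{v};\bm{w})}$. For $\sigma\in S_n$, $\bm{u}^\sigma=(u_{\sigma(1)},\dots,u_{\sigma(n)})$, $C^\sigma=\{\bm{u}^\sigma:\bm{u}\in C\}$. The average complete joint Jacobi polynomial is $\mathfrak{Jac}^{av}(C,D,\bm{w};x_a:a\in\mathfrak{R}^3)=\frac{1}{n!}\sum_{\sigma\in S_n}\mathfrak{Jac}(C^\sigma,D,\bm{w};x_a:a\in\mathfrak{R}^3)$.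 *)

From HB Require Import structures.
From mathcomp Require Import all_boot all_order all_algebra all_fingroup all_field.
From mathcomp Require Import mpoly.
Set Implicit Arguments. Unset Strict Implicit. Unset Printing Implicit Defensive.
Import Order.TTheory GRing.Theory Num.Theory.
Local Open Scope ring_scope.

Section JacobiDefs.
Variable R : finComNzRingType.

Definition R3 := (R * R * R)%type.
Definition nvar := #|{: R3}|.
Definition JPoly := {mpoly algC[nvar]}.
Definition xvar (a : R3) : JPoly := 'X_(enum_rank a).

Variable n : nat.
Definition word := 'rV[R]_n.

Definition permw (s : 'S_n) (u : word) : word := \row_i u ord0 (s i).
Definition permc (s : 'S_n) (C : {set word}) : {set word} :=
  [set permw s u | u in C].

Definition dual (C : {set word}) : {set word} :=
  [set v : word | [forall u in C, \sum_i u ord0 i * v ord0 i == 0]].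

Definition hcount (a : R3) (u v w : word) : nat :=
  #|[set i : 'I_n | (u ord0 i, v ord0 i, w ord0 i) == a]|.

Definition Jac (C D : {set word}) (w : word) : JPoly :=
  \sum_(u in C) \sum_(v in D) \prod_(a : R3) xvar a ^+ hcount a u v w.

Definition Jav (C D : {set word}) (w : word) : JPoly :=
  (n`!%:R : algC)^-1 *: \sum_(s : 'S_n) Jac (permc s C) D w.

Definition subst (L : R3 -> JPoly) (P : JPoly) : JPoly :=
  comp_mpoly [tuple L (enum_val i) | i < nvar] P.

Definition formI (chi : R -> algC) (a : R3) : JPoly :=
  let: (a1, a2, a3) := a in \sum_(b : R) chi (a2 * b) *: xvar (a1, b, a3).
Definition formII (chi : R -> algC) (a : R3) : JPoly :=
  let: (a1, a2, a3) := a in \sum_(b : R) chi (a1 * b) *: xvar (b, a2, a3).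
Definition formIII (chi : R -> algC) (a : R3) : JPoly :=
  let: (a1, a2, a3) := a in
  \sum_(b1 : R) \sum_(b2 : R) chi (a1 * b1 + a2 * b2) *: xvar (b1, b2, a3).

End JacobiDefs.

(* Jav C D w  is  Jac^av(C, D, w; x_a : a in R^3), the average being over
   the permutations of the first code, as in the paper. *)
Definition MacWilliamsJacAv (R : finComNzRingType) (chi : R -> algC)
  (islin : forall n, {set 'rV[R]_n} -> Prop) : Prop :=
  forall (n : nat) (C D : {set 'rV[R]_n}) (w : 'rV[R]_n),
    islin n C -> islin n D ->
    [/\ Jav C (dual D) w
          = (#|D|%:R : algC)^-1 *: subst (formI chi) (Jav C D w),
        Jav (dual C) D w
          = (#|C|%:R : algC)^-1 *: subst (formII chi) (Jav C D w)
      & Jav (dual C) (dual D) w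
          = ((#|C| * #|D|)%:R : algC)^-1 *: subst (formIII chi) (Jav C D w)].

Definition subspace_code (F : finFieldType) (n : nat) (C : {set 'rV[F]_n}) : Prop :=
  [/\ 0 \in C,
      forall u v, u \in C -> v \in C -> u + v \in C
    & forall (c : F) u, u \in C -> c *: u \in C].

Definition subgroup_code (k : nat) (n : nat) (C : {set 'rV['Z_k]_n}) : Prop :=
  [/\ 0 \in C,
      forall u v, u \in C -> v \in C -> u + v \in C
    & forall u, u \in C -> - u \in C].

(* Character of F_q, q = p^f: lam is a root of a primitive irreducible
   polynomial of degree f over F_p (i.e. a generator of F_q^x), coord a i
   is the i-th coordinate of a in the F_p-basis 1, lam, ..., lam^(f-1),
   and chi a = zeta_p ^ (coordinate 0). *)
Definition Fq_char_data (F : finFieldType) (p f : nat) (lam : F)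
  (coord : F -> nat -> 'I_p) (zeta : algC) : Prop :=
  [/\ prime p /\ p \in [pchar F], #|F| = (p ^ f)%N,
      (#|F|.-1).-primitive_root lam,
      (forall a : F, a = \sum_(i < f) ((coord a i : nat)%:R * lam ^+ i))
    & p.-primitive_root zeta].

From HB Require Import structures.
From mathcomp Require Import all_boot all_order all_algebra all_fingroup all_field.
From mathcomp Require Import mpoly.
Set Implicit Arguments. Unset Strict Implicit. Unset Printing Implicit Defensive.
Import GRing.Theory Num.Theory.
Local Open Scope ring_scope.

(* For a fixed permutation the identities hold already for Jac, and then pass to
   the average because permuting a code commutes with taking its dual.  To
   prove (i), expand the product of the linear forms coordinatewise: the
   substituted Jac C D w becomes a sum over all words b of
   chi(<v, b>) x_{(u, b, w)}, and summing over v in D the character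
   orthogonality relation sum_(d in D) chi(<d, b>) = |D| [b in D^perp] leaves
   exactly |D| Jac C D^perp w.  (ii) is symmetric and (iii) is (ii) after (i).
   Orthogonality holds for every additive code D on which chi(<., b>) is
   nontrivial whenever b is not in D^perp; for F_q this follows from
   chi(1) <> 1 by scaling, for Z_k from the primitivity of zeta. *)

Section Substitution.
Variable R : finComNzRingType.
Implicit Types (L : R3 R -> JPoly R) (P : JPoly R).

Lemma subst_xvar L a : subst L (xvar a) = L a.
Proof. by rewrite /subst /xvar comp_mpolyXU -tnth_nth tnth_mktuple enum_rankK. Qed.

Lemma substZ L c P : subst L (c *: P) = c *: subst L P.
Proof. exact: comp_mpolyZ. Qed.

Lemma subst_sum L I (r : seq I) (S : pred I) (F : I -> JPoly R) :
  subst L (\sum_(i <- r | S i) F i) = \sum_(i <- r | S i) subst L (F i).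
Proof. exact: raddf_sum. Qed.

Lemma subst_prod L I (r : seq I) (S : pred I) (F : I -> JPoly R) :
  subst L (\prod_(i <- r | S i) F i) = \prod_(i <- r | S i) subst L (F i).
Proof. exact: rmorph_prod. Qed.

End Substitution.

Section JacobiExpansion.
Variables (R : finComNzRingType) (n : nat).
Local Notation word := (word R n).
Implicit Types (C D : {set word}) (u v w b : word) (L : R3 R -> JPoly R).

Definition dot u v : R := \sum_i u ord0 i * v ord0 i.

Lemma in_dual C v : (v \in dual C) = [forall u in C, dot u v == 0].
Proof. by rewrite inE. Qed.

Lemma notin_dual C v : v \notin dual C -> exists2 u, u \in C & dot u v != 0.
Proof. by rewrite in_dual => /forall_inPn. Qed.

Lemma dotDl u v b : dot (u + v) b = dot u b + dot v b.
Proof. by rewrite /dot -big_split; apply: eq_bigr => i _; rewrite mxE mulrDl. Qed.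

Lemma dotZl c u b : dot (c *: u) b = c * dot u b.
Proof. by rewrite /dot mulr_sumr; apply: eq_bigr => i _; rewrite mxE mulrA. Qed.

Lemma prod_xvar_hcount u v w :
  \prod_(a : R3 R) xvar a ^+ hcount a u v w =
  \prod_i xvar (u ord0 i, v ord0 i, w ord0 i).
Proof.
rewrite [RHS](partition_big (fun i => (u ord0 i, v ord0 i, w ord0 i)) predT) //=.
apply: eq_bigr => a _; rewrite (eq_bigr (fun=> xvar a)); last by move=> i /eqP->.
by rewrite prodr_const /hcount cardsE.
Qed.

Lemma JacE C D w : Jac C D w =
  \sum_(u in C) \sum_(v in D) \prod_i xvar (u ord0 i, v ord0 i, w ord0 i).
Proof. by do 2![apply: eq_bigr => ? _]; rewrite prod_xvar_hcount. Qed.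

Lemma subst_Jac L C D w : subst L (Jac C D w) =
  \sum_(u in C) \sum_(v in D) \prod_i L (u ord0 i, v ord0 i, w ord0 i).
Proof.
rewrite JacE subst_sum; apply: eq_bigr => u _; rewrite subst_sum.
by apply: eq_bigr => v _; rewrite subst_prod; apply: eq_bigr => i _; rewrite subst_xvar.
Qed.

Lemma prod_sum_word (G : 'I_n -> R -> JPoly R) :
  \prod_i \sum_(b : R) G i b = \sum_(b : word) \prod_i G i (b ord0 i).
Proof.
rewrite bigA_distr_bigA /=.
pose to_ffun (b : word) : {ffun 'I_n -> R} := [ffun i => b ord0 i].
pose to_row (f : {ffun 'I_n -> R}) : word := \row_i f i.
have to_ffunK : cancel to_ffun to_row by move=> b; apply/rowP => i; rewrite mxE ffunE.
have to_rowK : cancel to_row to_ffun by move=> f; apply/ffunP => i; rewrite ffunE mxE.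
rewrite (reindex to_ffun); last by exists to_row => ? _.
by apply: eq_bigr => b _; apply: eq_bigr => i _; rewrite ffunE.
Qed.

End JacobiExpansion.

Section CharacterSums.
Variables (R : finComNzRingType) (n : nat) (chi : R -> algC).
Hypothesis chiD : {morph chi : a b / a + b >-> a * b}.
Hypothesis chi0 : chi 0 = 1.
Local Notation word := (word R n).
Implicit Types (C D : {set word}) (u v w : word).

Definition char_orthogonal D := forall b : word,
  \sum_(d in D) chi (dot d b) = if b \in dual D then #|D|%:R else 0.

Lemma char_orthogonal_addr_closed D :
  {in D &, forall u v, u + v \in D} ->
  (forall b, b \notin dual D -> exists2 d, d \in D & chi (dot d b) != 1) ->
  char_orthogonal D.
Proof.
move=> DD chi_sep b; case: ifPn => [bD | /chi_sep[d0 d0D chi_d0]].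
  rewrite (eq_bigr (fun=> 1)) ?sumr_const // => d dD.
  by move: bD; rewrite in_dual => /forall_inP/(_ d dD)/eqP->.
set S := \sum_(d in D) _.
have D_translate : (fun d => d0 + d) @: D = D.
  apply/eqP; rewrite eqEcard card_imset ?leqnn ?andbT; last exact: addrI.
  by apply/subsetP => _ /imsetP[d dD ->]; apply: DD.
have S_fixed : S = chi (dot d0 b) * S.
  rewrite {1}/S -{1}D_translate big_imset /=; last by move=> x y _ _; apply: addrI.
  by rewrite mulr_sumr; apply: eq_bigr => d _; rewrite dotDl chiD.
have : (1 - chi (dot d0 b)) * S = 0 by rewrite mulrBl mul1r -S_fixed subrr.
by move/eqP; rewrite mulf_eq0 subr_eq0 eq_sym (negbTE chi_d0) => /eqP.
Qed.

Lemma chi_dot u v : chi (dot u v) = \prod_i chi (u ord0 i * v ord0 i).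
Proof. exact: big_morph. Qed.

Lemma char_orthogonal_transform D (G : word -> JPoly R) : char_orthogonal D ->
  \sum_(d in D) \sum_(b : word) chi (dot d b) *: G b =
  #|D|%:R *: \sum_(b in dual D) G b.
Proof.
move=> orthD; rewrite exchange_big /=.
under eq_bigr do rewrite -scaler_suml orthD.
rewrite scaler_sumr [RHS]big_mkcond /=; apply: eq_bigr => b _.
by case: ifP; rewrite ?scale0r.
Qed.

Lemma prod_formI u v w :
  \prod_i formI chi (u ord0 i, v ord0 i, w ord0 i) =
  \sum_(b : word) chi (dot v b) *: \prod_i xvar (u ord0 i, b ord0 i, w ord0 i).
Proof.
by rewrite prod_sum_word; apply: eq_bigr => b _; rewrite scaler_prod chi_dot.
Qed.

Lemma prod_formII u v w :
  \prod_i formII chi (u ord0 i, v ord0 i, w ord0 i) =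
  \sum_(b : word) chi (dot u b) *: \prod_i xvar (b ord0 i, v ord0 i, w ord0 i).
Proof.
by rewrite prod_sum_word; apply: eq_bigr => b _; rewrite scaler_prod chi_dot.
Qed.

Lemma subst_formII_formI a : subst (formII chi) (formI chi a) = formIII chi a.
Proof.
case: a => [[a1 a2] a3] /=; rewrite subst_sum.
rewrite (eq_bigr (fun b =>
  \sum_b1 chi (a2 * b) *: (chi (a1 * b1) *: xvar (b1, b, a3)))).
  rewrite exchange_big /=; apply: eq_bigr => b1 _; apply: eq_bigr => b2 _.
  by rewrite scalerA -chiD addrC.
by move=> b _; rewrite substZ subst_xvar scaler_sumr.
Qed.

Lemma natr_invZK (m : nat) (P : JPoly R) :
  (0 < m)%N -> (m%:R : algC)^-1 *: (m%:R *: P) = P.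
Proof. by move=> m_gt0; rewrite scalerA mulVf ?scale1r // pnatr_eq0 -lt0n. Qed.

Lemma Jac_dualr C D w : char_orthogonal D -> (0 < #|D|)%N ->
  Jac C (dual D) w = (#|D|%:R : algC)^-1 *: subst (formI chi) (Jac C D w).
Proof.
move=> orthD D_gt0; rewrite subst_Jac JacE scaler_sumr; apply: eq_bigr => u _.
under [in RHS]eq_bigr do rewrite prod_formI.
by rewrite char_orthogonal_transform // natr_invZK.
Qed.

Lemma Jac_duall C D w : char_orthogonal C -> (0 < #|C|)%N ->
  Jac (dual C) D w = (#|C|%:R : algC)^-1 *: subst (formII chi) (Jac C D w).
Proof.
move=> orthC C_gt0; rewrite subst_Jac JacE exchange_big [in RHS]exchange_big /=.
rewrite scaler_sumr; apply: eq_bigr => v _.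
under [in RHS]eq_bigr do rewrite prod_formII.
by rewrite char_orthogonal_transform // natr_invZK.
Qed.

Lemma Jac_dual C D w : char_orthogonal C -> (0 < #|C|)%N ->
  char_orthogonal D -> (0 < #|D|)%N ->
  Jac (dual C) (dual D) w =
  ((#|C| * #|D|)%:R : algC)^-1 *: subst (formIII chi) (Jac C D w).
Proof.
move=> orthC C_gt0 orthD D_gt0.
rewrite Jac_duall // Jac_dualr // substZ scalerA natrM invfM mulrC.
congr (_ *: _); rewrite !subst_Jac subst_sum; apply: eq_bigr => u _.
rewrite subst_sum; apply: eq_bigr => v _; rewrite subst_prod.
by apply: eq_bigr => i _; rewrite subst_formII_formI.
Qed.

End CharacterSums.

Section PermutedCodes.
Variables (R : finComNzRingType) (n : nat) (s : 'S_n).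
Local Notation word := (word R n).
Implicit Types (C : {set word}) (u v : word).

Lemma permwK : cancel (@permw R n s) (permw s^-1).
Proof. by move=> u; apply/rowP => i; rewrite !mxE permKV. Qed.

Lemma permwVK : cancel (@permw R n s^-1) (permw s).
Proof. by move=> u; apply/rowP => i; rewrite !mxE permK. Qed.

Lemma permw_inj : injective (@permw R n s).
Proof. exact: can_inj permwK. Qed.

Lemma permw0 : permw s (0 : word) = 0.
Proof. by apply/rowP => i; rewrite !mxE. Qed.

Lemma permwD u v : permw s (u + v) = permw s u + permw s v.
Proof. by apply/rowP => i; rewrite !mxE. Qed.

Lemma permwN u : permw s (- u) = - permw s u.
Proof. by apply/rowP => i; rewrite !mxE. Qed.

Lemma permwZ c u : permw s (c *: u) = c *: permw s u.
Proof. by apply/rowP => i; rewrite !mxE. Qed.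

Lemma dot_permw u v : dot (permw s u) (permw s v) = dot u v.
Proof.
rewrite /dot [RHS](reindex_inj (@perm_inj _ s)) /=.
by apply: eq_bigr => i _; rewrite !mxE.
Qed.

Lemma card_permc C : #|permc s C| = #|C|.
Proof. exact/card_imset/permw_inj. Qed.

Lemma permc0 C : 0 \in C -> 0 \in permc s C.
Proof. by move=> C0; rewrite -permw0; apply: imset_f. Qed.

Lemma permc_addr_closed C :
  {in C &, forall u v, u + v \in C} ->
  {in permc s C &, forall u v, u + v \in permc s C}.
Proof.
move=> CD _ _ /imsetP[u uC ->] /imsetP[v vC ->].
by rewrite -permwD; apply/imset_f/CD.
Qed.

Lemma permc_dual C : permc s (dual C) = dual (permc s C).
Proof.
apply/setP => x; apply/imsetP/idP => [[u uC ->] | xD].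
  rewrite in_dual; apply/forall_inP => _ /imsetP[c cC ->].
  by rewrite dot_permw; move: uC; rewrite in_dual => /forall_inP; apply.
exists (permw s^-1 x); last by rewrite permwVK.
rewrite in_dual; apply/forall_inP => c cC.
rewrite -(dot_permw c) permwVK.
by move: xD; rewrite in_dual => /forall_inP; apply; apply: imset_f.
Qed.

End PermutedCodes.

Section AveragedIdentities.
Variables (R : finComNzRingType) (chi : R -> algC).
Hypothesis chiD : {morph chi : a b / a + b >-> a * b}.
Hypothesis chi0 : chi 0 = 1.
Variable islin : forall n, {set 'rV[R]_n} -> Prop.
Hypothesis code0 : forall n (C : {set 'rV[R]_n}), islin C -> 0 \in C.
Hypothesis code_permc :
  forall n (s : 'S_n) (C : {set 'rV[R]_n}), islin C -> islin (permc s C).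
Hypothesis code_orthogonal :
  forall n (C : {set 'rV[R]_n}), islin C -> char_orthogonal chi C.

Lemma Jav_transform n (L : R3 R -> JPoly R) c (C C' D D' : {set 'rV[R]_n}) w :
  (forall s, Jac (permc s C') D' w = c *: subst L (Jac (permc s C) D w)) ->
  Jav C' D' w = c *: subst L (Jav C D w).
Proof.
move=> JacP; rewrite /Jav substZ subst_sum scalerA [c * _]mulrC -scalerA.
by congr (_ *: _); rewrite scaler_sumr; apply: eq_bigr => s _; apply: JacP.
Qed.

Lemma code_card_gt0 n (C : {set 'rV[R]_n}) : islin C -> (0 < #|C|)%N.
Proof. by move/code0 => C0; apply/card_gt0P; exists 0. Qed.

Lemma MacWilliamsJacAv_orthogonal : MacWilliamsJacAv chi islin.
Proof.
move=> n C D w linC linD.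
have [orthD D_gt0] := (code_orthogonal linD, code_card_gt0 linD).
split; apply: Jav_transform => s; have linCs := code_permc s linC.
all: have [orthCs Cs_gt0] := (code_orthogonal linCs, code_card_gt0 linCs).
all: rewrite ?permc_dual -?(card_permc s C).
- exact: Jac_dualr.
- exact: Jac_duall.
- exact: Jac_dual.
Qed.

End AveragedIdentities.

Section ZkCharacter.
Variables (k : nat) (zeta : algC).
Hypotheses (k_gt1 : (1 < k)%N) (zeta_prim : k.-primitive_root zeta).
Local Notation chi := (fun a : 'Z_k => zeta ^+ (a : nat)).

Lemma Zk_charD : {morph chi : a b / a + b >-> a * b}.
Proof.
move=> a b /=; rewrite -exprD -(prim_expr_mod zeta_prim (a + b)).
by congr (_ ^+ _); move: (a : nat) (b : nat) => x y; rewrite Zp_cast.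
Qed.

Lemma Zk_char_neq1 (a : 'Z_k) : a != 0 -> chi a != 1.
Proof.
move=> a_neq0; rewrite -(expr0 zeta) (eq_prim_root_expr zeta_prim) mod0n.
rewrite modn_small; last by rewrite -[k in (_ < k)%N](Zp_cast k_gt1).
by apply: contra a_neq0 => /eqP a0; apply/eqP/val_inj.
Qed.

Lemma subgroup_code_permc n (s : 'S_n) (C : {set 'rV['Z_k]_n}) :
  subgroup_code C -> subgroup_code (permc s C).
Proof.
case=> C0 CD CN; split; [exact: permc0 | exact: permc_addr_closed |].
by move=> _ /imsetP[u uC ->]; rewrite -permwN; apply/imset_f/CN.
Qed.

Lemma subgroup_code_orthogonal n (C : {set 'rV['Z_k]_n}) :
  subgroup_code C -> char_orthogonal chi C.
Proof.
case=> _ CD _; apply: (char_orthogonal_addr_closed Zk_charD (expr0 zeta)) => //.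
move=> b b_notin.
have [d dC db_neq0] := notin_dual b_notin.
by exists d; last exact: Zk_char_neq1.
Qed.

Lemma Zk_MacWilliamsJacAv : MacWilliamsJacAv chi (@subgroup_code k).
Proof.
apply: (MacWilliamsJacAv_orthogonal Zk_charD (expr0 zeta)).
- by move=> n C [].
- exact: subgroup_code_permc.
- exact: subgroup_code_orthogonal.
Qed.

End ZkCharacter.

Section FqCharacter.
Variables (F : finFieldType) (p f : nat) (lam : F).
Variables (coord : F -> nat -> 'I_p) (zeta : algC).
Hypothesis data : @Fq_char_data F p f lam coord zeta.
Local Notation chi := (fun a : F => zeta ^+ (coord a 0%N : nat)).

Let p_prime : prime p. Proof. by case: data => [[]]. Qed.
Let p_char : p \in [pchar F]. Proof. by case: data => [[]]. Qed.
Let cardF : #|F| = (p ^ f)%N. Proof. by case: data. Qed.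
Let coordE a : a = \sum_(i < f) (coord a i : nat)%:R * lam ^+ i.
Proof. by case: data. Qed.
Let zeta_prim : p.-primitive_root zeta. Proof. by case: data. Qed.

Definition coords (a : F) : {ffun 'I_f -> 'I_p} := [ffun i : 'I_f => coord a i].
Definition of_coords (h : {ffun 'I_f -> 'I_p}) : F :=
  \sum_(i < f) (h i : nat)%:R * lam ^+ i.

Lemma coordsK : cancel coords of_coords.
Proof. by move=> a; rewrite [RHS]coordE; apply: eq_bigr => i _; rewrite ffunE. Qed.

(* Uniqueness of coordinates follows by counting from #|F| = p ^ f. *)
Lemma of_coordsK : cancel of_coords coords.
Proof.
have coords_bij : bijective coords.
  by apply: inj_card_bij; [exact: can_inj coordsK | rewrite card_ffun !card_ord cardF].
exact/(bij_can_sym coords_bij)/coordsK.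
Qed.

Lemma dim_gt0 : (0 < f)%N.
Proof.
by rewrite lt0n; apply/eqP => f0; move: (card_finNzRing_gt1 F); rewrite cardF f0.
Qed.

Let i0 : 'I_f := Ordinal dim_gt0.

Lemma coord0_of_coords h : coord (of_coords h) 0 = h i0.
Proof. by rewrite -[in RHS](of_coordsK h) ffunE. Qed.

Lemma Fq_charD : {morph chi : a b / a + b >-> a * b}.
Proof.
move=> a b /=.
pose h := [ffun i : 'I_f =>
  Ordinal (ltn_pmod (coord a i + coord b i) (prime_gt0 p_prime))].
have -> : a + b = of_coords h.
  rewrite {1}(coordE a) {1}(coordE b) -big_split; apply: eq_bigr => i _.
  by rewrite ffunE /= (GRing.natr_mod_pchar p_char) natrD mulrDl.
by rewrite coord0_of_coords ffunE /= (prim_expr_mod zeta_prim) exprD.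
Qed.

Lemma Fq_char0 : chi 0 = 1.
Proof.
have <- : of_coords [ffun=> Ordinal (prime_gt0 p_prime)] = 0.
  by rewrite /of_coords big1 // => i _; rewrite ffunE mul0r.
by rewrite /= coord0_of_coords ffunE.
Qed.

Lemma Fq_char1_neq1 : chi 1 != 1.
Proof.
pose h := [ffun i : 'I_f =>
  if i == i0 then Ordinal (prime_gt1 p_prime) else Ordinal (prime_gt0 p_prime)].
have <- : of_coords h = 1.
  rewrite /of_coords (bigD1 i0) //= big1 ?addr0 => [|i ne_i0].
    by rewrite ffunE eqxx /= mul1r expr0.
  by rewrite ffunE (negbTE ne_i0) /= mul0r.
rewrite /= coord0_of_coords ffunE eqxx /= -(expr0 zeta).
by rewrite (eq_prim_root_expr zeta_prim) mod0n modn_small ?prime_gt1.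
Qed.

Lemma subspace_code_permc n (s : 'S_n) (C : {set 'rV[F]_n}) :
  subspace_code C -> subspace_code (permc s C).
Proof.
case=> C0 CD CZ; split; [exact: permc0 | exact: permc_addr_closed |].
by move=> c _ /imsetP[u uC ->]; rewrite -permwZ; apply/imset_f/CZ.
Qed.

Lemma subspace_code_orthogonal n (C : {set 'rV[F]_n}) :
  subspace_code C -> char_orthogonal chi C.
Proof.
case=> _ CD CZ; apply: (char_orthogonal_addr_closed Fq_charD Fq_char0) => //.
move=> b b_notin.
have [d dC db_neq0] := notin_dual b_notin.
exists ((dot d b)^-1 *: d); first exact: CZ.
by rewrite dotZl mulVf // Fq_char1_neq1.
Qed.

Lemma Fq_MacWilliamsJacAv : MacWilliamsJacAv chi (@subspace_code F).
Proof.
apply: (MacWilliamsJacAv_orthogonal Fq_charD Fq_char0).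
- by move=> n C [].
- exact: subspace_code_permc.
- exact: subspace_code_orthogonal.
Qed.

End FqCharacter.

Theorem mainTheorem6 :
  (forall (F : finFieldType) (p f : nat) (lam : F)
          (coord : F -> nat -> 'I_p) (zeta : algC),
      @Fq_char_data F p f lam coord zeta ->
      MacWilliamsJacAv (fun a : F => zeta ^+ (coord a 0%N : nat))
                       (@subspace_code F))
  /\
  (forall (k : nat) (zeta : algC),
      (1 < k)%N -> k.-primitive_root zeta ->
      MacWilliamsJacAv (fun a : 'Z_k => zeta ^+ (a : nat)) (@subgroup_code k)).
Proof.
split=> [F p f lam coord zeta data | k zeta k_gt1 zeta_prim].
- exact: Fq_MacWilliamsJacAv data.
- exact: Zk_MacWilliamsJacAv.
Qed.
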